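(* Let $F\leq F'\leq\hat F$ be permutation groups on $\Omega$. The following are equivalent: (i) $G(F,F')^+$ has index two in $G(F,F')$, i.e. $G(F,F')^+=G(F,F')^\star$; (ii) $G(F,F')^+$ has finite index in $G(F,F')$; (iii) $F$ is transitive on $\Omega$ and $F'$ is generated by its point stabilizers.
   Context: Standing notation. $\Omega$ is a finite set with $d=|\Omega|\geq 3$, $\mathcal{T}_d$ is the $d$-regular tree with vertex set $V$ and set $E$ of non-oriented edges. Fix a coloring $c:E\to\Omega$ such that for every vertex $v$ its restriction $c_v$ to the set $E(v)$ of edges containing $v$ is a bijection onto $\Omega$. For $g\in\mathrm{Aut}(\mathcal{T}_d)$ and $v\in V$, the local permutation is $\sigma(g,v)=c_{gv}\circ g_v\circ c_v^{-1}\in\mathrm{Sym}(\Omega)$, where $g_v:E(v)\to E(gv)$ is induced by $g$. For $F\leq\mathrm{Sym}(\Omega)$: $U(F)=\{g:\sigma(g,v)\in F \ \forall v\}$; $G(F)=\{g:\sigma(g,v)\in F \text{ for all but finitely many } v\}$; $\hat F$ is the subgroup of permutations preserving each $F$-orbit. For $F\leq F'\leq\hat F$, $G(F,F')=G(F)\cap U(F')$. For a group $G$ acting on a tree, $G^\star$ is the subgroup preserving the natural bipartition of the vertex set (vertices at even distance in the same class), and $G^+$ is the subgroup generated by the pointwise stabilizers $G_e$ of all edges $e$. *)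

From HB Require Import structures.
From mathcomp Require Import all_boot all_order all_fingroup.
Set Implicit Arguments. Unset Strict Implicit. Unset Printing Implicit Defensive.

(* Concrete model of the d-regular tree T_d with a legal coloring by Omega:
   a vertex is a reduced word over Omega (no two consecutive letters equal),
   written with the most recent letter first.  The neighbour of v across the
   edge of colour w is [step v w]: it deletes the head letter if it is w,
   otherwise it prepends w.  Thus the edge {v, step v w} has colour w, and
   every vertex has exactly one incident edge of each colour. *)

Section Tree.
Variable Omega : finType.

Definition reduced (s : seq Omega) : bool := sorted (fun a b => a != b) s.

Definition step_seq (s : seq Omega) (w : Omega) : seq Omega :=
  if s is a :: t then (if a == w then t else w :: s) else [:: w].

Lemma step_reduced (s : seq Omega) (w : Omega) :
  reduced s -> reduced (step_seq s w).
Proof.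
case: s => [|a t] //= H.
case: eqP => [_|/eqP naw]; first by case: t H => //= b t /andP[].
by rewrite /reduced /= eq_sym naw.
Qed.

Definition vertex := {s : seq Omega | reduced s}.

Definition step (v : vertex) (w : Omega) : vertex :=
  exist _ (step_seq (sval v) w) (step_reduced w (proj2_sig v)).

Definition adj (u v : vertex) : Prop := exists w, v = step u w.

Definition is_aut (g : vertex -> vertex) : Prop :=
  bijective g /\ forall u v, adj u v <-> adj (g u) (g v).

(* sigma(g,v) \in F : the local permutation at v lies in F
   (sigma(g,v) maps the colour w of the edge {v, step v w} to the colour of
   its image {g v, g (step v w)}). *)
Definition loc_in (F : {set {perm Omega}}) (g : vertex -> vertex) (v : vertex)
  : Prop :=
  exists2 p, p \in F & forall w, g (step v w) = step (g v) (p w).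

Definition U_ (F : {set {perm Omega}}) (g : vertex -> vertex) : Prop :=
  is_aut g /\ forall v, loc_in F g v.

Definition G_ (F : {set {perm Omega}}) (g : vertex -> vertex) : Prop :=
  is_aut g /\ exists l : seq vertex, forall v, v \notin l -> loc_in F g v.

Definition GFF (F F' : {set {perm Omega}}) (g : vertex -> vertex) : Prop :=
  G_ F g /\ U_ F' g.

Definition hatF (F : {group {perm Omega}}) : {set {perm Omega}} :=
  [set p : {perm Omega} | [forall x, p x \in orbit 'P F x]].

Inductive gen (S : (vertex -> vertex) -> Prop) : (vertex -> vertex) -> Prop :=
| gen_id : gen S id
| gen_mul g h : S g -> gen S h -> gen S (g \o h)
| gen_invmul g g' h : S g -> cancel g g' -> cancel g' g -> gen S h ->
    gen S (g' \o h).

Definition edge_stab (G : (vertex -> vertex) -> Prop) (v : vertex) (w : Omega)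
  (g : vertex -> vertex) : Prop :=
  G g /\ g v = v /\ g (step v w) = step v w.

Definition plus (G : (vertex -> vertex) -> Prop) : (vertex -> vertex) -> Prop :=
  gen (fun g => exists v w, edge_stab G v w g).

Definition in_lcoset (H : (vertex -> vertex) -> Prop) (a g : vertex -> vertex)
  : Prop :=
  exists2 h, H h & forall v, g v = a (h v).

Definition has_index (G H : (vertex -> vertex) -> Prop) (n : nat) : Prop :=
  exists r : 'I_n -> (vertex -> vertex),
    (forall i, G (r i)) /\
    (forall g, G g -> exists i, in_lcoset H (r i) g) /\
    (forall i j, in_lcoset H (r i) (r j) -> i = j).

End Tree.

(* If F is transitive and F' is generated by point stabilizers, the extension
   to the tree of an element of F' fixing a colour stabilizes an edge, so
   every root-fixing element of G(F,F') lies in G(F,F')^+; conjugating by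
   translations, G(F,F')^+ rotates the edges at each vertex, hence contains
   every type-preserving element, and has index two.
   Conversely, let K be F, or the subgroup of F' generated by its point
   stabilizers.  An edge stabilizer in G(F,F') fixes a vertex and its local
   permutations preserve the K-orbits (for the second choice of K, because
   adjacent local permutations differ by a point stabilizer), so it acts
   trivially on the quotient tree whose edge colours are the K-orbits, and
   so does all of G(F,F')^+.  If F is not transitive, or F' is not generated
   by point stabilizers, two colours lie in different K-orbits, and the
   translations along words alternating between them lie in infinitely many
   cosets of G(F,F')^+. *)

From HB Require Import structures.
From mathcomp Require Import all_boot all_order all_fingroup.
From Stdlib Require Import FunctionalExtensionality ClassicalEpsilon.
Set Implicit Arguments. Unset Strict Implicit. Unset Printing Implicit Defensive.

Section ReducedWords.
Variable T : finType.
Implicit Types (s x y : seq T) (a w : T).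

Lemma reduced_cons a s : reduced (a :: s) -> reduced s.
Proof. by case: s => //= b s /andP[]. Qed.

Lemma step_seqK s w : reduced s -> step_seq (step_seq s w) w = s.
Proof.
case: s => [|a t] /=; first by rewrite eqxx.
case: eqP => [<-|/eqP naw] H; last by rewrite /= eqxx.
by case: t H => [|b t] //= /andP[ab _]; rewrite eq_sym (negbTE ab).
Qed.

Lemma step_seq_cons s a : reduced (a :: s) -> step_seq s a = a :: s.
Proof. by case: s => [|b t] //= /andP[ab _]; rewrite eq_sym (negbTE ab). Qed.

Lemma step_seq_inj s : injective (step_seq s).
Proof.
case: s => [|a t] w w' /=; first by case.
case: (a =P w) => [<-|_]; case: (a =P w') => [<-|_] //.
- by move/(congr1 size)=> /= /eqP; rewrite -addn2 -{1}(addn0 (size t)) eqn_add2l.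
- by move/(congr1 size)=> /= /eqP; rewrite -addn2 -{2}(addn0 (size t)) eqn_add2l.
- by case.
Qed.

Lemma odd_step_seq s w : odd (size (step_seq s w)) = ~~ odd (size s).
Proof. by case: s => [|a t] //=; case: eqP => //= _; rewrite negbK. Qed.

(* [rmul x s] is the reduced form of the word [x s] in the free product of
   copies of Z/2 indexed by [T], the letters of [s] being applied last first. *)
Definition rmul x s := foldr (fun a acc => step_seq acc a) x s.

Lemma rmul_reduced x s : reduced x -> reduced (rmul x s).
Proof. by move=> Hx; elim: s => //= a s IH; apply: step_reduced. Qed.

Lemma rmul_map_step (U : finType) (f : U -> T) x (s : seq U) u : reduced x ->
  rmul x (map f (step_seq s u)) = step_seq (rmul x (map f s)) (f u).
Proof.
move=> Hx; case: s => [|a t] //=; case: eqP => [->|_] //=.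
by rewrite step_seqK // rmul_reduced.
Qed.

Lemma rmul_step x s w : reduced x -> rmul x (step_seq s w) = step_seq (rmul x s) w.
Proof. by move=> Hx; have := @rmul_map_step T id x s w Hx; rewrite !map_id. Qed.

Lemma rmulA x y s : reduced x -> rmul x (rmul y s) = rmul (rmul x y) s.
Proof. by move=> Hx; elim: s => //= a s IH; rewrite rmul_step // IH. Qed.

Lemma rmul_kernel x s : reduced x -> rmul [::] s = [::] -> rmul x s = x.
Proof. by move=> Hx E; have := @rmulA x [::] s Hx; rewrite E. Qed.

Lemma rmul_nil s : reduced s -> rmul [::] s = s.
Proof.
elim: s => //= a s IH Hs.
by rewrite IH ?(reduced_cons Hs) // step_seq_cons.
Qed.

Lemma rmul_inv x : reduced x ->
  exists2 x', reduced x' & rmul x' x = [::] /\ rmul x x' = [::].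
Proof.
elim: x => [|a t IH] Hx; first by exists [::].
have [t' Ht' [E1 E2]] := IH (reduced_cons Hx).
exists (rmul [:: a] t'); first exact: rmul_reduced.
by rewrite /= -rmulA // E1 /= eqxx rmulA //= eqxx.
Qed.

Lemma rmul_injl s x y : reduced x -> reduced y -> rmul x s = rmul y s -> x = y.
Proof.
move=> Hx Hy; elim: s => //= a s IH E.
by apply: IH; rewrite -(step_seqK a (rmul_reduced s Hx)) E step_seqK ?rmul_reduced.
Qed.

Lemma odd_size_rmul x s : odd (size (rmul x s)) = odd (size x) (+) odd (size s).
Proof. by elim: s => [|a s IH] /=; rewrite ?addbF // odd_step_seq IH addbN. Qed.

End ReducedWords.

Local Open Scope group_scope.

Section Automorphisms.
Variable Omega : finType.
Local Notation vertex := (vertex Omega).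
Local Notation step := (@step Omega).
Implicit Types (g h : vertex -> vertex) (u v : vertex) (w : Omega).

Definition vroot : vertex := exist _ [::] isT.

Lemma stepK v w : step (step v w) w = v.
Proof. exact/val_inj/step_seqK/(proj2_sig v). Qed.

Lemma step_inj v : injective (step v).
Proof. by move=> w w' /(congr1 val) /step_seq_inj. Qed.

Lemma vertex_ind (P : vertex -> Prop) :
  P vroot -> (forall v w, P v -> P (step v w)) -> forall v, P v.
Proof.
move=> P0 PS [s Hs]; elim: s Hs => [|a t IH] Hs.
  by have -> : exist _ [::] Hs = vroot by apply: val_inj.
have -> : exist _ (a :: t) Hs = step (exist _ t (reduced_cons Hs)) a.
  by apply: val_inj; rewrite /= step_seq_cons.
exact/PS/IH.
Qed.

Lemma vertex_step_size v n :
  size (sval v) = n.+1 -> exists u w, v = step u w /\ size (sval u) = n.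
Proof.
case: v => [[|a t] Ht] //= [En]; exists (exist _ t (reduced_cons Ht)), a.
by split=> //; apply: val_inj; rewrite /= step_seq_cons.
Qed.

Lemma aut_of_loc g : bijective g ->
  (forall v, exists p : {perm Omega}, forall w, g (step v w) = step (g v) (p w)) ->
  is_aut g.
Proof.
move=> bg Hl; split=> // u v; have [p Hp] := Hl u; split=> [[w ->]|[w E]].
  by exists (p w).
by exists (p^-1 w); apply: (bij_inj bg); rewrite Hp permKV.
Qed.

Lemma aut_comp g h : is_aut g -> is_aut h -> is_aut (g \o h).
Proof.
move=> [bg Hg] [bh Hh]; split; first exact: bij_comp.
by move=> u v; rewrite (Hh u v) (Hg (h u) (h v)).
Qed.

Lemma aut_inv g g' : is_aut g -> cancel g g' -> cancel g' g -> is_aut g'.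
Proof.
move=> [_ Hg] K1 K2; split; first exact: Bijective K2 K1.
by move=> u v; rewrite (Hg (g' u) (g' v)) !K2.
Qed.

Lemma loc_in_sub (X Y : {set {perm Omega}}) g v :
  X \subset Y -> loc_in X g v -> loc_in Y g v.
Proof. by move=> /subsetP sXY [p Hp E]; exists p => //; apply: sXY. Qed.

Lemma loc_in_comp (X : {group {perm Omega}}) g h v :
  loc_in X h v -> loc_in X g (h v) -> loc_in X (g \o h) v.
Proof.
move=> [p Hp Ep] [q Hq Eq]; exists (p * q); first exact: groupM.
by move=> w; rewrite /= Ep Eq permM.
Qed.

Lemma loc_in_inv (X : {group {perm Omega}}) g g' v :
  cancel g g' -> cancel g' g -> loc_in X g (g' v) -> loc_in X g' v.
Proof.
move=> K1 K2 [p Hp E]; exists p^-1; first by rewrite groupV.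
by move=> w; apply: (can_inj K1); rewrite K2 E K2 permKV.
Qed.

Lemma loc_perm_uniq g v (p q : {perm Omega}) :
  (forall w, g (step v w) = step (g v) (p w)) ->
  (forall w, g (step v w) = step (g v) (q w)) -> p = q.
Proof. by move=> Ep Eq; apply/permP => w; apply: (@step_inj (g v)); rewrite -Ep -Eq. Qed.

Section GFFgroup.
Variables F F' : {group {perm Omega}}.
Local Notation G := (GFF F F').

Lemma GFF_comp g h : G g -> G h -> G (g \o h).
Proof.
move=> [[ag [lg Hlg]] [_ Ug]] [[ah [lh Hlh]] [_ Uh]].
have [h' K1 _] := ah.1.
split; split; try exact: aut_comp; last by move=> v; apply: loc_in_comp.
exists (lh ++ map h' lg) => v; rewrite mem_cat negb_or => /andP[vh vg].
apply: loc_in_comp; first exact: Hlh.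
by apply: Hlg; apply: contra vg => hv; rewrite -(K1 v) map_f.
Qed.

Lemma GFF_inv g g' : G g -> cancel g g' -> cancel g' g -> G g'.
Proof.
move=> [[ag [lg Hlg]] [_ Ug]] K1 K2.
have ai := aut_inv ag K1 K2.
split; split => //; last by move=> v; apply: (loc_in_inv K1 K2).
exists (map g lg) => v vg; apply: (loc_in_inv K1 K2); apply: Hlg.
by apply: contra vg => hv; rewrite -(K2 v) map_f.
Qed.

End GFFgroup.

Section Generated.
Variable S : (vertex -> vertex) -> Prop.

Lemma gen_base g : S g -> gen S g.
Proof. by move=> Sg; apply: (gen_mul Sg (gen_id S)). Qed.

Lemma gen_comp g h : gen S g -> gen S h -> gen S (g \o h).
Proof.
elim=> [|g1 h1 Sg1 _ IH|g1 g1' h1 Sg1 K1 K2 _ IH] Hh //.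
- exact: gen_mul Sg1 (IH Hh).
- exact: gen_invmul Sg1 K1 K2 (IH Hh).
Qed.

Lemma gen_inverse g : (forall s, S s -> bijective s) -> gen S g ->
  exists g', [/\ gen S g', cancel g g' & cancel g' g].
Proof.
move=> bijS; elim=> [|g1 h1 Sg1 _ [h' [Gh' Kh Kh']]|g1 g1' h1 Sg1 K1 K2 _ [h' [Gh' Kh Kh']]].
- by exists id; split => //; exact: gen_id.
- have [g1' K1 K2] := bijS _ Sg1.
  exists (h' \o g1'); split=> [|v|v] /=; rewrite ?K1 ?Kh ?Kh' ?K2 //.
  exact/gen_comp/(gen_invmul Sg1 K1 K2 (gen_id _)).
- exists (h' \o g1); split=> [|v|v] /=; rewrite ?K1 ?Kh ?Kh' ?K2 //.
  exact/gen_comp/(gen_mul Sg1 (gen_id _)).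
Qed.

Lemma gen_ind_closed (P : (vertex -> vertex) -> Prop) :
  P id -> (forall g h, P g -> P h -> P (g \o h)) ->
  (forall g g', P g -> cancel g g' -> cancel g' g -> P g') ->
  (forall s, S s -> P s) -> forall g, gen S g -> P g.
Proof.
move=> P1 PM PV PS g; elim=> // [g1 h1 Sg1 _ Ph|g1 g1' h1 Sg1 K1 K2 _ Ph].
- exact: PM (PS _ Sg1) Ph.
- exact: PM (PV _ _ (PS _ Sg1) K1 K2) Ph.
Qed.

End Generated.

Definition transl (x v : vertex) : vertex :=
  exist _ (rmul (sval x) (sval v)) (rmul_reduced (sval v) (proj2_sig x)).

Lemma transl_step x v w : transl x (step v w) = step (transl x v) w.
Proof. by apply: val_inj; rewrite /= rmul_step //; case: x. Qed.

Lemma transl_root x : transl x vroot = x.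
Proof. exact: val_inj. Qed.

Lemma translK x : exists x', cancel (transl x) (transl x') /\ cancel (transl x') (transl x).
Proof.
case: x => s Hs; have [s' Hs' [E1 E2]] := rmul_inv Hs.
exists (exist _ s' Hs'); split => v; apply: val_inj;
  by rewrite /= rmulA // ?E1 ?E2 rmul_nil //; case: v.
Qed.

Lemma transl_loc (X : {group {perm Omega}}) x v : loc_in X (transl x) v.
Proof. by exists 1 => // w; rewrite perm1 transl_step. Qed.

Lemma transl_GFF (F F' : {group {perm Omega}}) x : GFF F F' (transl x).
Proof.
have [x' [K1 K2]] := translK x.
have ax : is_aut (transl x).
  apply: aut_of_loc => [|v]; first by exists (transl x').
  by have [p _ Ep] := transl_loc 1%G x v; exists p.
by split; split=> //; [exists [::] => v _ | move=> v]; apply: transl_loc.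
Qed.

Lemma odd_transl x v :
  odd (size (sval (transl x v))) = odd (size (sval x)) (+) odd (size (sval v)).
Proof. exact: odd_size_rmul. Qed.

End Automorphisms.

Section Extension.
Variable Omega : finType.
Local Notation vertex := (vertex Omega).
Local Notation step := (@step Omega).
Local Notation vroot := (vroot Omega).
Variables F F' : {group {perm Omega}}.
Hypothesis sFF' : F \subset F'.
Hypothesis sF'hat : F' \subset hatF F.
Variable p : {perm Omega}.
Hypothesis pF' : p \in F'.

(* Defaults to [q] when no element of [F] agrees with [q] at [a]; this does
   not happen for [q \in hatF F]. *)
Definition agree_F (a : Omega) (q : {perm Omega}) : {perm Omega} :=
  odflt q [pick f in F | f a == q a].

Lemma agree_FP a q : q \in hatF F -> agree_F a q \in F /\ agree_F a q a = q a.
Proof.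
rewrite inE => /forallP /(_ a) /orbitP [f fF E].
rewrite /agree_F; case: pickP => [f' /andP[f'F /eqP ->]|/(_ f)] //=.
by rewrite fF -E eqxx.
Qed.

(* Local permutations of an automorphism fixing the root, with local
   permutation [p] there and in [F] elsewhere: going outwards along the
   letter [a], the next one must agree with the current one on [a]. *)
Fixpoint ext_loc (t : seq Omega) : {perm Omega} :=
  if t is a :: t' then agree_F a (ext_loc t') else p.

Lemma ext_loc_F' t : ext_loc t \in F'.
Proof.
elim: t => [|a t IH] //=.
by have [+ _] := agree_FP a (subsetP sF'hat _ IH); apply: (subsetP sFF').
Qed.

Lemma ext_loc_F a t : ext_loc (a :: t) \in F.
Proof. by have [] := agree_FP a (subsetP sF'hat _ (ext_loc_F' t)). Qed.

Lemma ext_loc_head a t : ext_loc (a :: t) a = ext_loc t a.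
Proof. by have [] := agree_FP a (subsetP sF'hat _ (ext_loc_F' t)). Qed.

Fixpoint ext_word (t : seq Omega) : seq Omega :=
  if t is a :: t' then ext_loc t' a :: ext_word t' else [::].

Fixpoint ext_wordV (u : seq Omega) : seq Omega :=
  if u is b :: u' then (ext_loc (ext_wordV u'))^-1 b :: ext_wordV u' else [::].

Lemma ext_word_reduced t : reduced t -> reduced (ext_word t).
Proof.
elim: t => [|a t IH] //; case: t IH => [|b t] IH // /andP[ab Hbt].
have := IH Hbt; rewrite [ext_word (a :: _)]/= /reduced /= => ->.
by rewrite -ext_loc_head (inj_eq perm_inj) ab.
Qed.

Lemma ext_wordV_reduced u : reduced u -> reduced (ext_wordV u).
Proof.
elim: u => [|b u IH] //; case: u IH => [|c u] IH // /andP[bc Hcu].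
have := IH Hcu; rewrite [ext_wordV (b :: _)]/= /reduced /= => ->; rewrite andbT.
set a' := (ext_loc (ext_wordV u))^-1 c; apply: contraNneq bc => E.
by rewrite -(permKV (ext_loc (a' :: ext_wordV u)) b) E ext_loc_head permKV.
Qed.

Lemma ext_wordK : cancel ext_word ext_wordV.
Proof. by elim=> //= a t ->; rewrite permK. Qed.

Lemma ext_wordVK : cancel ext_wordV ext_word.
Proof. by elim=> //= b u ->; rewrite permKV. Qed.

Lemma ext_word_step t w : reduced t ->
  ext_word (step_seq t w) = step_seq (ext_word t) (ext_loc t w).
Proof.
case: t => [|a t] // _ /=; case: (a =P w) => [<-|/eqP naw] /=.
  by rewrite ext_loc_head eqxx.
by rewrite -ext_loc_head (inj_eq perm_inj) (negbTE naw).
Qed.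

Definition ext (v : vertex) : vertex :=
  exist _ (ext_word (sval v)) (ext_word_reduced (proj2_sig v)).

Definition extV (v : vertex) : vertex :=
  exist _ (ext_wordV (sval v)) (ext_wordV_reduced (proj2_sig v)).

Lemma extK : cancel ext extV.
Proof. by move=> v; apply: val_inj; rewrite /= ext_wordK. Qed.

Lemma extVK : cancel extV ext.
Proof. by move=> v; apply: val_inj; rewrite /= ext_wordVK. Qed.

Lemma ext_step v w : ext (step v w) = step (ext v) (ext_loc (sval v) w).
Proof. by apply: val_inj; rewrite /= ext_word_step //; case: v. Qed.

Lemma ext_root : ext vroot = vroot.
Proof. exact: val_inj. Qed.

Lemma ext_root_step w : ext (step vroot w) = step vroot (p w).
Proof. by rewrite ext_step ext_root. Qed.

Lemma ext_GFF : GFF F F' ext.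
Proof.
have loc_ext (X : {set {perm Omega}}) v :
    ext_loc (sval v) \in X -> loc_in X ext v.
  by exists (ext_loc (sval v)) => // w; rewrite ext_step.
have ae : is_aut ext.
  apply: aut_of_loc; first exact: Bijective extK extVK.
  by move=> v; exists (ext_loc (sval v)) => w; rewrite ext_step.
split; split => //; last by move=> v; apply/loc_ext/ext_loc_F'.
exists [:: vroot] => -[[|a t] Ht]; rewrite inE => nv; apply: loc_ext.
  by move: nv; rewrite (_ : exist _ _ _ = vroot) //; apply: val_inj.
exact: ext_loc_F.
Qed.

End Extension.

Lemma hatF_group_set (Omega : finType) (K : {group {perm Omega}}) :
  group_set (hatF K).
Proof.
apply/group_setP; split=> [|q r]; rewrite !inE.
  by apply/forallP => x; rewrite perm1 orbit_refl.
move=> /forallP Hq /forallP Hr; apply/forallP => x.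
by rewrite permM (orbit_trans (Hr _) (Hq _)).
Qed.

Canonical hatF_group (Omega : finType) (K : {group {perm Omega}}) :=
  group (hatF_group_set K).

Section OrbitWords.
Variable Omega : finType.
Local Notation vertex := (vertex Omega).
Local Notation vroot := (vroot Omega).
Variable K : {group {perm Omega}}.
Implicit Types (g h : vertex -> vertex) (v : vertex) (s : seq Omega).

Local Notation orb := (orbit 'P K).

Lemma sub_hatF : K \subset hatF K.
Proof. by apply/subsetP => q qK; rewrite inE; apply/forallP => x; apply: mem_orbit. Qed.

Lemma orbit_hatF q a : q \in hatF K -> orb (q a) = orb a.
Proof. by rewrite inE => /forallP /(_ a) /orbit_eqP. Qed.

(* The projection of a vertex to the tree whose edge colours are the
   [K]-orbits. *)
Definition orbit_word s : seq {set Omega} := rmul [::] (map orb s).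

Lemma orbit_word_reduced s : reduced (orbit_word s).
Proof. exact: rmul_reduced. Qed.

Definition hat_local g := forall v, loc_in (hatF K) g v.

Definition otype g := orbit_word (sval (g vroot)).

Lemma orbit_word_hat_local g v : hat_local g ->
  orbit_word (sval (g v)) = rmul (otype g) (map orb (sval v)).
Proof.
move=> lg; elim/vertex_ind: v => [|v a IH] /=; first by [].
have [q qh ->] := lg v.
rewrite /orbit_word rmul_map_step // -/(orbit_word _) IH orbit_hatF //.
by rewrite -rmul_map_step // orbit_word_reduced.
Qed.

Lemma otype_fix g v : hat_local g -> g v = v -> otype g = [::].
Proof.
move=> lg gv; apply: (@rmul_injl _ (map orb (sval v))) => //.
  exact: orbit_word_reduced.
by rewrite -(orbit_word_hat_local v lg) gv.
Qed.

Definition orbit_neutral g := [/\ is_aut g, hat_local g & otype g = [::]].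

Lemma orbit_neutral_comp g h :
  orbit_neutral g -> orbit_neutral h -> orbit_neutral (g \o h).
Proof.
move=> [ag lg tg] [ah lh th]; split; first exact: aut_comp.
  by move=> v; apply: loc_in_comp.
by rewrite /otype /= (orbit_word_hat_local _ lg) tg; exact: th.
Qed.

Lemma orbit_neutral_inv g g' :
  orbit_neutral g -> cancel g g' -> cancel g' g -> orbit_neutral g'.
Proof.
move=> [ag lg tg] K1 K2; have lg' : hat_local g' by move=> v; apply: loc_in_inv K1 K2 _.
split=> //; first exact: aut_inv ag K1 K2.
by have := orbit_word_hat_local (g' vroot) lg; rewrite K2 tg => /esym.
Qed.

Lemma gen_orbit_neutral (S : (vertex -> vertex) -> Prop) :
  (forall f, S f -> orbit_neutral f) -> forall g, gen S g -> orbit_neutral g.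
Proof.
apply: gen_ind_closed; [|exact: orbit_neutral_comp|exact: orbit_neutral_inv].
by split=> //; [split=> //; exists id | move=> v; exists 1 => // w; rewrite perm1].
Qed.

Lemma otype_lcoset g h x : orbit_neutral h ->
  (forall v, transl x v = g (h v)) -> otype g = orbit_word (sval x).
Proof.
move=> Nh E; have [h' K1 K2] := (let: And3 ah _ _ := Nh in ah.1).
have [_ _ th'] := orbit_neutral_inv Nh K1 K2.
have lx : hat_local (transl x) by move=> v; apply: transl_loc.
rewrite /otype; have -> : g vroot = transl x (h' vroot) by rewrite E K2.
rewrite (orbit_word_hat_local _ lx) /otype transl_root.
exact/rmul_kernel/th'/orbit_word_reduced.
Qed.

Section Alternating.
Variables a b : Omega.
Hypothesis ab : orb a != orb b.

Fixpoint alt i := if i is i'.+1 then (if odd i' then a else b) :: alt i' else [::].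

Lemma reduced_orbit_alt i : reduced (map orb (alt i)).
Proof.
elim: i => [|[|i] IH] //=; rewrite /reduced /= in IH *; rewrite IH andbT.
by case: (odd i); rewrite //= eq_sym.
Qed.

Lemma reduced_alt i : reduced (alt i).
Proof.
have := reduced_orbit_alt i; rewrite /reduced sorted_map.
by apply: sub_sorted => x y; apply: contraNneq => ->.
Qed.

Lemma size_orbit_word_alt i : size (orbit_word (alt i)) = i.
Proof. by rewrite /orbit_word rmul_nil ?reduced_orbit_alt // size_map; elim: i => //= i ->. Qed.

(* The translations along the words [alt i] have pairwise distinct orbit
   words, whereas an orbit-neutral subgroup has constant orbit word on each
   coset. *)
Lemma no_finite_index (G S : (vertex -> vertex) -> Prop) n :
  (forall x, G (transl x)) -> (forall f, S f -> orbit_neutral f) ->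
  ~ has_index G (gen S) n.
Proof.
move=> Gtransl NS [r [_ [cover _]]].
pose avert i : vertex := exist _ (alt i) (reduced_alt i).
have sel (i : 'I_n.+1) : {k : 'I_n | in_lcoset (gen S) (r k) (transl (avert i))}.
  exact/constructive_indefinite_description/cover/Gtransl.
have f_inj : injective (fun i => sval (sel i)).
  move=> i j Eij; apply: val_inj => /=.
  have [hi Si Ei] := proj2_sig (sel i); have [hj Sj Ej] := proj2_sig (sel j).
  rewrite -(size_orbit_word_alt i) -(size_orbit_word_alt j).
  rewrite -(otype_lcoset (gen_orbit_neutral NS Si) Ei).
  by rewrite -(otype_lcoset (gen_orbit_neutral NS Sj) Ej) Eij.
by have := leq_card _ f_inj; rewrite !card_ord ltnn.
Qed.

End Alternating.
End OrbitWords.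

Section Main.
Variable Omega : finType.
Local Notation vertex := (vertex Omega).
Local Notation step := (@step Omega).
Local Notation vroot := (vroot Omega).
Variables F F' : {group {perm Omega}}.
Hypothesis sFF' : F \subset F'.
Hypothesis sF'hat : F' \subset hatF F.
Variable c0 : Omega.
Local Notation G := (GFF F F').
Local Notation N := <<\bigcup_(x : Omega) 'C_F'[x | 'P]>>.
Implicit Types (f g h : vertex -> vertex) (v : vertex).

Lemma GFF_id : G id.
Proof.
suff -> : (id : vertex -> vertex) = transl vroot by apply: transl_GFF.
by apply: functional_extensionality => v; apply: val_inj; rewrite /= rmul_nil //; case: v.
Qed.

Lemma plus_GFF f : plus G f -> G f.
Proof.
apply: gen_ind_closed => [||g g'|g [v [w []]]] //.
- exact: GFF_id.
- exact: GFF_comp.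
- exact: GFF_inv.
Qed.

Lemma plus_inverse f : plus G f -> exists f', [/\ plus G f', cancel f f' & cancel f' f].
Proof. by apply: gen_inverse => g [v [w [[[[bg _] _] _] _]]]. Qed.

Lemma edge_stab_orbit_neutral g : (exists v w, edge_stab G v w g) -> orbit_neutral F g.
Proof.
move=> [v [w [[[ag _] [_ Ug]] [gv _]]]].
have lg : hat_local F g by move=> u; apply: loc_in_sub sF'hat (Ug u).
by split=> //; apply: otype_fix gv.
Qed.

Lemma plus_orbit_neutral f : plus G f -> orbit_neutral F f.
Proof. by apply: gen_orbit_neutral; apply: edge_stab_orbit_neutral. Qed.

Lemma plus_even f : plus G f -> ~~ odd (size (sval (f vroot))).
Proof.
move/plus_orbit_neutral => [_ _ /(congr1 (odd \o size))] /=.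
by rewrite odd_size_rmul size_map /= => ->.
Qed.

Lemma plus_conj t t' f : G t -> cancel t t' -> cancel t' t ->
  plus G f -> plus G (t \o f \o t').
Proof.
move=> Gt K1 K2; have Gt' := GFF_inv Gt K1 K2; have [_ [_ Ut]] := Gt.
have conj_gen g : (exists v w, edge_stab G v w g) ->
    exists v w, edge_stab G v w (t \o g \o t').
  move=> [v [w [Gg [gv gw]]]]; have [p _ Ep] := Ut v.
  exists (t v), (p w); split; first by do 2![apply: GFF_comp => //].
  by rewrite /= K1 gv -Ep K1 gw.
elim=> [|g h Sg _ IH|g g' h Sg K3 K4 _ IH].
- suff -> : t \o id \o t' = id by apply: gen_id.
  by apply: functional_extensionality => x; apply: K2.
- suff -> : t \o (g \o h) \o t' = (t \o g \o t') \o (t \o h \o t').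
    exact: gen_mul (conj_gen _ Sg) IH.
  by apply: functional_extensionality => x; rewrite /= K1.
- suff -> : t \o (g' \o h) \o t' = (t \o g' \o t') \o (t \o h \o t').
    by apply: (gen_invmul (conj_gen _ Sg)) IH => x; rewrite /= ?K1 ?K3 ?K4 K2.
  by apply: functional_extensionality => x; rewrite /= K1.
Qed.

Lemma mem_gen_stabs q x : q \in F' -> q x = x -> q \in N.
Proof. by move=> qF qx; apply/mem_gen/bigcupP; exists x; rewrite // inE qF; apply/astab1P. Qed.

Lemma gen_stabs_sub : N \subset F'.
Proof. by rewrite gen_subG; apply/bigcupsP => x _; apply: subsetIl. Qed.

(* Adjacent local permutations both send the colour of the edge joining
   their vertices to the colour of its image, so they differ by an element
   fixing that colour. *)
Lemma loc_perm_coset g v (p p0 : {perm Omega}) : (forall u, loc_in F' g u) ->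
  (forall w, g (step vroot w) = step (g vroot) (p0 w)) ->
  p \in F' -> (forall w, g (step v w) = step (g v) (p w)) -> p * p0^-1 \in N.
Proof.
move=> Ug E0; elim/vertex_ind: v p => [|v a IH] p pF Ep.
  by rewrite (loc_perm_uniq Ep E0) mulgV group1.
have [r rF Er] := Ug v.
have pa : p a = r a.
  by apply: (@step_inj _ (g (step v a))); rewrite -Ep stepK Er stepK.
rewrite -(mulgKV r p) -mulgA groupM ?IH //.
by apply: (mem_gen_stabs (x := a)); rewrite ?groupM ?groupV // permM pa permK.
Qed.

Lemma edge_stab_loc_gen_stabs g v0 c : (forall u, loc_in F' g u) ->
  g v0 = v0 -> g (step v0 c) = step v0 c -> hat_local N g.
Proof.
move=> Ug gv0 gc; have [p0 p0F E0] := Ug vroot; have [q0 q0F E0'] := Ug v0.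
have q0N : q0 \in N.
  apply: (mem_gen_stabs (x := c)) => //.
  by apply: (@step_inj _ (g v0)); rewrite -E0' gc gv0.
have p0N : p0 \in N.
  by have := loc_perm_coset Ug E0 q0F E0'; rewrite groupMl // groupV.
move=> v; have [q qF Eq] := Ug v; exists q => //.
apply: (subsetP (sub_hatF _)).
by have := loc_perm_coset Ug E0 qF Eq; rewrite groupMr ?groupV.
Qed.

Lemma ext_plus c x (cF' : c \in F') : c x = x -> plus G (ext sFF' sF'hat cF').
Proof.
move=> cx; apply: gen_base; exists vroot, x.
by split; [apply: ext_GFF | rewrite ext_root ext_root_step cx].
Qed.

Section Sufficiency.
Hypothesis Ftrans : [transitive F, on [set: Omega] | 'P].
Hypothesis F'gen : (F' :=: N)%g.

Lemma realize_gen_stabs q : q \in N -> exists2 h, plus G h &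
  h vroot = vroot /\ forall w, h (step vroot w) = step vroot (q w).
Proof.
case/gen_prodgP => m [cs Hc ->]; elim: m cs Hc => [|m IH] cs Hc.
  by rewrite big_ord0; exists id; [apply: gen_id | split => // w; rewrite perm1].
rewrite big_ord_recr /=.
have [h Ph [h0 Eh]] := IH _ (fun i => Hc (widen_ord (leqnSn m) i)).
have /bigcupP [x _ /setIP [cF' /astab1P cx]] := Hc ord_max.
exists (ext sFF' sF'hat cF' \o h); first exact: gen_comp (ext_plus cF' cx) Ph.
by split => [|w]; rewrite /= ?h0 ?ext_root // Eh ext_root_step permM.
Qed.

Lemma stab_root_plus g : G g -> g vroot = vroot -> plus G g.
Proof.
move=> Gg groot; have [_ [_ Ug]] := Gg; have [q qF' Eq] := Ug vroot.
rewrite F'gen in qF'.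
have [h Ph [h0 Eh]] := realize_gen_stabs qF'.
have [h' [Ph' K1 K2]] := plus_inverse Ph.
suff Pe : plus G (h' \o g).
  suff -> : g = h \o (h' \o g) by apply: gen_comp.
  by apply: functional_extensionality => v; rewrite /= K2.
apply: gen_base; exists vroot, c0; split.
  exact: GFF_comp (plus_GFF Ph') Gg.
by rewrite /= groot -{1}h0 K1 Eq groot -Eh K1.
Qed.

(* Conjugating the extension of an element of [F] by a translation rotates
   the edges at any vertex. *)
Lemma plus_rotate u b a : exists2 k, plus G k & k (step u b) = step u a.
Proof.
have [f fF fba] := atransP2 Ftrans (in_setT b) (in_setT a).
have [u' [K1 K2]] := translK u.
have fF' : f \in F' := subsetP sFF' _ fF.
exists (transl u \o ext sFF' sF'hat fF' \o transl u').
  apply: plus_conj (transl_GFF _ _ u) K1 K2 _.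
  by apply: stab_root_plus; [apply: ext_GFF | apply: ext_root].
have u'u : transl u' u = vroot by rewrite -[in LHS](transl_root u) K1.
by rewrite /comp transl_step u'u ext_root_step transl_step transl_root fba.
Qed.

Lemma plus_of_even g : G g -> ~~ odd (size (sval (g vroot))) -> plus G g.
Proof.
move=> Gg /negbTE ev; have := odd_double_half (size (sval (g vroot))).
rewrite ev add0n; move: _./2 => n /esym; clear ev; elim: n g Gg => [|n IH] g Gg Hs.
  by apply: stab_root_plus => //; apply/val_inj/size0nil.
have [u [a [gu /vertex_step_size [u' [b [uu' Hu']]]]]] := vertex_step_size Hs.
have [k Pk kE] := plus_rotate u a b.
have [k' [Pk' K1 K2]] := plus_inverse Pk.
suff -> : g = k' \o (k \o g).
  apply: gen_comp Pk' (IH _ (GFF_comp (plus_GFF Pk) Gg) _).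
  by rewrite /= gu kE uu' stepK.
by apply: functional_extensionality => v; rewrite /= K1.
Qed.

Lemma plus_index_two : has_index G (plus G) 2.
Proof.
pose t := transl (step vroot c0).
have tK v : t (t v) = v.
  by apply: val_inj; rewrite /= rmulA //= eqxx rmul_nil //; case: v.
have odd_t v : odd (size (sval (t v))) = ~~ odd (size (sval v)) by rewrite odd_transl.
exists (fun i : 'I_2 => if val i is 0 then id else t); split; [|split].
- by move=> [[|i] ?]; [apply: GFF_id | apply: transl_GFF].
- move=> g Gg; case Hg: (odd (size (sval (g vroot)))).
    exists (@Ordinal 2 1 isT), (t \o g) => [|v]; last by rewrite /= tK.
    by apply: plus_of_even; [apply: GFF_comp (transl_GFF _ _ _) Gg | rewrite /= odd_t Hg].
  by exists (@Ordinal 2 0 isT), g => //; apply: plus_of_even; rewrite ?Hg.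
- move=> [[|[|i]] Hi] [[|[|j]] Hj] // [h Ph /= Eh]; try exact: val_inj.
    by have := plus_even Ph; rewrite -Eh odd_t.
  by have := plus_even Ph; rewrite (_ : h vroot = t vroot) ?odd_t // -[h _]tK -Eh.
Qed.

End Sufficiency.

Lemma transitive_of_index n : has_index G (plus G) n ->
  [transitive F, on [set: Omega] | 'P].
Proof.
move=> Hn; apply/imsetP; exists c0 => //; apply/setP => x; rewrite inE; symmetry.
apply/negPn/negP => nx; apply: (no_finite_index (K := F) (a := c0) (b := x) _ _ _ Hn).
- by apply: contra nx => /eqP ->; apply: orbit_refl.
- exact: transl_GFF.
- exact: edge_stab_orbit_neutral.
Qed.

Lemma gen_stabs_of_index n : has_index G (plus G) n -> (F' :=: N)%g.
Proof.
move=> Hn; apply/eqP; rewrite eqEsubset gen_stabs_sub andbT.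
apply/subsetP => q qF'; apply/negPn/negP => qN.
apply: (no_finite_index (K := N%G) (a := c0) (b := q c0) _ _ _ Hn).
- apply/negP => /eqP E; have /orbitP [m mN mE] : q c0 \in orbit 'P N c0.
    by rewrite E orbit_refl.
  have mF' : m \in F' := subsetP gen_stabs_sub _ mN.
  have : q * m^-1 \in N.
    by apply: (mem_gen_stabs (x := c0)); rewrite ?groupM ?groupV // permM -mE permK.
  by rewrite groupMr ?groupV // (negbTE qN).
- exact: transl_GFF.
- move=> g [v [w [[[ag _] [_ Ug]] [gv gw]]]].
  have lg := edge_stab_loc_gen_stabs Ug gv gw.
  by split=> //; apply: otype_fix gv.
Qed.

End Main.

Local Close Scope group_scope.

Theorem mainTheorem16 (Omega : finType) (F F' : {group {perm Omega}}) :
  3 <= #|Omega| ->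
  F \subset F' -> F' \subset hatF F ->
  (has_index (GFF F F') (plus (GFF F F')) 2 <->
   exists n, has_index (GFF F F') (plus (GFF F F')) n) /\
  ((exists n, has_index (GFF F F') (plus (GFF F F')) n) <->
   ([transitive F, on [set: Omega] | 'P] /\
    (F' :=: <<\bigcup_(x : Omega) 'C_F'[x | 'P]>>)%g)).
Proof.
move=> Omega3 sFF' sF'hat.
have /card_gt0P [c0 _] : 0 < #|Omega| by apply: leq_trans Omega3.
have nec n : has_index (GFF F F') (plus (GFF F F')) n ->
    [transitive F, on [set: Omega] | 'P] /\
    (F' :=: <<\bigcup_(x : Omega) 'C_F'[x | 'P]>>)%g.
  by move=> Hn; split; [apply: transitive_of_index Hn | apply: gen_stabs_of_index Hn].
have suf : [transitive F, on [set: Omega] | 'P] /\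
    (F' :=: <<\bigcup_(x : Omega) 'C_F'[x | 'P]>>)%g ->
    has_index (GFF F F') (plus (GFF F F')) 2.
  by case=> Ftrans F'gen; apply: plus_index_two.
split; split.
- by exists 2.
- by case=> n /nec/suf.
- by case=> n /nec.
- by move/suf; exists 2.
Qed.
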